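(* Consider a system of $n$ equations $x_i=f_i$ ($i=1,\dots,n$) over a directed set $\mathbb D$ where all right-hand sides $f_i:(\{x_1,\dots,x_n\}\to\mathbb D)\to\mathbb D$ are monotonic, and run algorithm SRR (defined below) from an arbitrary initial mapping $\rho_0$ by calling $\mathsf{solve}(n)$. Then: (1) If $\mathbb D$ has height $h$ and $\Box=\sqcup$ is a binary upper bound operator on $\mathbb D$, then SRR terminates with a post solution after at most $n+\frac h2 n(n+1)$ evaluations of right-hand sides. (2) If $\Box=\boxdot$ (for arbitrary widening $\nabla$ and narrowing $\triangle$, and $\mathbb D$ possibly having infinite ascending chains), SRR terminates and returns a post solution.
   Context: Algorithm SRR (structured round-robin) with binary operator $\Box$, maintaining a global mapping $\rho$: the recursive procedure $\mathsf{solve}(i)$ does: if $i=0$ return; call $\mathsf{solve}(i-1)$; compute $new:=\rho[x_i]\,\Box\, f_i\,\rho$ (one evaluation of a right-hand side); if $\rho[x_i]\neq new$ then set $\rho[x_i]:=new$ and call $\mathsf{solve}(i)$. A directed set is a poset in which any two elements have an upper bound; a binary upper bound operator $\sqcup$ returns some upper bound $a\sqcup b\sqsupseteq a,b$. $\mathbb D$ has height $h$ if $h$ is the maximal length of a strictly increasing chain $d_0\sqsubset d_1\sqsubset\dots\sqsubset d_h$. Monotonic: $\rho\sqsubseteq\rho'$ pointwise implies $f\rho\sqsubseteq f\rho'$. Post solution: $\rho[x_i]\sqsupseteq f_i\rho$ for all $i$. A widening operator is a binary operator $\nabla$ on $\mathbb D$ with $a\sqsubseteq a\nabla b$ and $b\sqsubseteq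 a\nabla b$ for all $a,b$, such that there is no infinite sequence $a_0,a_1,\dots$ with $a_{i+1}=a_i\nabla b_i$ and $a_{i+1}\neq a_i$ for all $i$. A narrowing operator is a binary operator $\triangle$ such that $b\sqsubseteq a$ implies $b\sqsubseteq a\triangle b\sqsubseteq a$, and there is no infinite sequence with $b_i\sqsubseteq a_i$, $a_{i+1}=a_i\triangle b_i$, $a_{i+1}\ne a_i$ for all $i$. $a\boxdot b=a\triangle b$ if $b\sqsubseteq a$, else $a\nabla b$. *)

From HB Require Import structures.
From mathcomp Require Import all_boot all_order.
Set Implicit Arguments. Unset Strict Implicit. Unset Printing Implicit Defensive.
Import Order.TTheory.
Local Open Scope order_scope.

Section SRR.
Context {disp : Order.disp_t} {D : porderType disp}.

Definition directed : Prop := forall a b : D, exists c : D, a <= c /\ b <= c.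

Definition upper_bound_op (join : D -> D -> D) : Prop :=
  forall a b : D, a <= join a b /\ b <= join a b.

Definition has_height (h : nat) : Prop :=
  (exists c : nat -> D, forall i, (i < h)%N -> c i < c i.+1) /\
  (forall (m : nat) (c : nat -> D), (forall i, (i < m)%N -> c i < c i.+1) -> (m <= h)%N).

Definition is_widening (w : D -> D -> D) : Prop :=
  (forall a b : D, a <= w a b /\ b <= w a b) /\
  ~ (exists a b : nat -> D, forall i, a i.+1 = w (a i) (b i) /\ a i.+1 <> a i).

Definition is_narrowing (nr : D -> D -> D) : Prop :=
  (forall a b : D, b <= a -> b <= nr a b /\ nr a b <= a) /\
  ~ (exists a b : nat -> D,
        forall i, b i <= a i /\ a i.+1 = nr (a i) (b i) /\ a i.+1 <> a i).

Definition boxdot (w nr : D -> D -> D) (a b : D) : D :=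
  if b <= a then nr a b else w a b.

Variable n : nat.

(* mappings rho : {x_1..x_n} -> D ; variable x_{i+1} is the ordinal i *)
Definition monotonic (g : ('I_n -> D) -> D) : Prop :=
  forall rho rho' : 'I_n -> D, (forall j, rho j <= rho' j) -> g rho <= g rho'.

Definition post_solution (f : 'I_n -> ('I_n -> D) -> D) (rho : 'I_n -> D) : Prop :=
  forall i, f i rho <= rho i.

Definition upd (rho : 'I_n -> D) (i : 'I_n) (v : D) : 'I_n -> D :=
  fun j => if j == i then v else rho j.

(* Big-step semantics of SRR: [solve_rel box f i rho rho' k] means that the
   call solve(i) started with global mapping rho terminates, leaving the global
   mapping rho', after exactly k evaluations of right-hand sides.
   solve(i.+1) processes the variable x_{i+1}, i.e. the ordinal i. *)
Inductive solve_rel (box : D -> D -> D) (f : 'I_n -> ('I_n -> D) -> D)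
  : nat -> ('I_n -> D) -> ('I_n -> D) -> nat -> Prop :=
| solve_zero : forall rho, solve_rel box f 0 rho rho 0
| solve_stable : forall (i : 'I_n) rho rho1 k1,
    solve_rel box f i rho rho1 k1 ->
    box (rho1 i) (f i rho1) = rho1 i ->
    solve_rel box f i.+1 rho rho1 (k1 + 1)
| solve_change : forall (i : 'I_n) rho rho1 rho2 k1 k2,
    solve_rel box f i rho rho1 k1 ->
    box (rho1 i) (f i rho1) <> rho1 i ->
    solve_rel box f i.+1 (upd rho1 i (box (rho1 i) (f i rho1))) rho2 k2 ->
    solve_rel box f i.+1 rho rho2 (k1 + 1 + k2).

End SRR.

From HB Require Import structures.
From mathcomp Require Import all_boot all_order zify.
From Stdlib Require Import ClassicalEpsilon Classical.
Set Implicit Arguments. Unset Strict Implicit. Unset Printing Implicit Defensive.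
Import Order.TTheory.
Local Open Scope order_scope.

(* The call solve(i) never touches x_(i+1), ..., x_n, and it returns a mapping
   that satisfies x_j >= f_j for all j <= i as soon as [a box b = a] forces
   [b <= a]; both operators have this property.  SRR can only diverge if some
   solve(i+1) keeps re-invoking itself, which produces an infinite sequence
   a_(t+1) = a_t box b_t <> a_t of values of x_(i+1).  For an upper bound
   operator this is a strictly increasing chain, impossible in finite height;
   moreover x_(j+1) then changes at most h times, and each change costs at
   most j+1 further evaluations.  For boxdot, once one narrowing step has been
   taken every later round starts from a post solution of x_1, ..., x_(i+1),
   so by monotonicity all later steps are narrowing steps; hence the sequence
   is either an infinite widening or eventually an infinite narrowing
   sequence. *)

Section Solve.
Context {disp : Order.disp_t} {D : porderType disp} {n : nat}.
Implicit Types (rho : 'I_n -> D) (f : 'I_n -> ('I_n -> D) -> D) (box : D -> D -> D).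

Definition post_below f (m : nat) rho := forall j : 'I_n, (j < m)%N -> f j rho <= rho j.

Definition box_stable_le box := forall a b : D, box a b = a -> b <= a.

Lemma post_below_le f m m' rho :
  (m' <= m)%N -> post_below f m rho -> post_below f m' rho.
Proof. by move=> le_m'm post j lt_jm'; apply: post; apply: leq_trans le_m'm. Qed.

Lemma post_below_upd f (i : 'I_n) rho v : (forall j, monotonic (f j)) ->
  post_below f i rho -> f i rho <= v -> v <= rho i ->
  post_below f i.+1 (upd rho i v).
Proof.
move=> mono post le_fv le_v j.
have le_upd k : upd rho i v k <= rho k by rewrite /upd; case: eqP => [->|].
rewrite ltnS => le_ji; apply: le_trans (mono _ _ _ le_upd) _.
case: (eqVneq j i) => [->|ne_ji]; first by rewrite /upd eqxx.
by rewrite /upd (negbTE ne_ji); apply: post; rewrite ltn_neqAle le_ji andbT.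
Qed.

Lemma solve_rel_frame box f m rho rho' k : solve_rel box f m rho rho' k ->
  forall j : 'I_n, (m <= j)%N -> rho' j = rho j.
Proof.
elim=> {m rho rho' k} [//|i rho rho1 k1 _ IH _|i rho rho1 rho2 k1 k2 _ IH1 _ _ IH2] j le_ij.
- exact/IH/ltnW.
- rewrite IH2 // /upd; case: eqP => [eq_ji|_]; first by rewrite eq_ji ltnn in le_ij.
  exact/IH1/ltnW.
Qed.

Lemma solve_rel_post_below box f m rho rho' k : box_stable_le box ->
  solve_rel box f m rho rho' k -> post_below f m rho'.
Proof.
move=> stable; elim=> {m rho rho' k} [//|i rho rho1 k1 _ IH fixed|//] j.
rewrite ltnS leq_eqVlt => /orP[/eqP/val_inj->|]; [exact: stable fixed | exact: IH].
Qed.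

Lemma solve_rel_post_solution box f rho rho' k : box_stable_le box ->
  solve_rel box f n rho rho' k -> post_solution f rho'.
Proof. by move=> stable solve j; apply: (solve_rel_post_below stable solve). Qed.

Lemma join_stable_le join : upper_bound_op join -> box_stable_le join.
Proof. by move=> ub a b eq_ja; rewrite -eq_ja; case: (ub a b). Qed.

Lemma boxdot_stable_le w nr : is_widening w -> box_stable_le (boxdot w nr).
Proof.
move=> [ub _] a b; rewrite /boxdot; case: ifP => // nle eq_wa.
by rewrite -nle -eq_wa; case: (ub a b).
Qed.

Lemma solve_rel_boxdot_le w nr f m rho rho' k :
  is_widening w -> is_narrowing nr -> (forall j, monotonic (f j)) ->
  solve_rel (boxdot w nr) f m rho rho' k -> post_below f m rho ->
  forall j, rho' j <= rho j.
Proof.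
move=> wide [narrow _] mono.
elim=> {m rho rho' k} [rho _ //|i rho rho1 k1 _ IH _|i rho rho1 rho2 k1 k2 solve1 IH1 _ _ IH2] post.
  exact: IH (post_below_le (leqnSn i) post).
have le1 := IH1 (post_below_le (leqnSn i) post).
have le_f : f i rho1 <= rho1 i.
  rewrite (solve_rel_frame solve1 (leqnn i)).
  exact: le_trans (mono _ _ _ le1) (post _ (ltnSn i)).
have [le_fv le_v] := narrow _ _ le_f.
have post1 := solve_rel_post_below (boxdot_stable_le (nr := nr) wide) solve1.
move: IH2; rewrite /boxdot le_f => IH2 j.
apply: le_trans (le1 j); apply: le_trans (IH2 (post_below_upd mono post1 le_fv le_v) j) _.
by rewrite /upd; case: eqP => [->|].
Qed.

Definition lt_chain (a b : D) (m : nat) :=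
  exists s : seq D, [/\ path <%O a s, last a s = b & size s = m].

Lemma lt_chain_refl a : lt_chain a a 0.
Proof. by exists [::]. Qed.

Lemma lt_chain_upd rho (i j : 'I_n) v :
  rho i < v -> lt_chain (rho j) (upd rho i v j) (j == i).
Proof.
by rewrite /upd; case: eqP => [-> lt_v|_ _]; [exists [:: v]; rewrite /= lt_v | apply: lt_chain_refl].
Qed.

Lemma lt_chain_cat a b c m m' :
  lt_chain a b m -> lt_chain b c m' -> lt_chain a c (m + m').
Proof.
move=> [s [path_s <- <-]] [s' [path_s' <- <-]].
by exists (s ++ s'); rewrite cat_path last_cat size_cat path_s path_s'.
Qed.

Lemma lt_chain_height h a b m : has_height (D := D) h -> lt_chain a b m -> (m <= h)%N.
Proof.
move=> [_ bounded] [s [/(pathP a) lt_s _ <-]].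
exact: (bounded _ (fun t => nth a (a :: s) t)).
Qed.

Lemma sum_succ_indicator (i : 'I_n) : (\sum_(j < n) j.+1 * (j == i) = i.+1)%N.
Proof.
rewrite (bigD1 i) //= eqxx muln1 big1 ?addn0 // => j /negbTE ->.
by rewrite muln0.
Qed.

Lemma solve_rel_cost join f m rho rho' k : upper_bound_op join ->
  solve_rel join f m rho rho' k ->
  exists C : 'I_n -> nat, (forall j, lt_chain (rho j) (rho' j) (C j)) /\
    (k <= m + \sum_(j < n) j.+1 * C j)%N.
Proof.
move=> ub; elim=> {m rho rho' k} [rho|i rho rho1 k1 _ [C [chain cost]] _|].
- by exists (fun _ => 0%N); split=> // j; apply: lt_chain_refl.
- by exists C; split=> //; move: cost; lia.
move=> i rho rho1 rho2 k1 k2 _ [C1 [chain1 cost1]] changed _ [C2 [chain2 cost2]].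
have lt_v : rho1 i < join (rho1 i) (f i rho1).
  by rewrite lt_neqAle eq_sym (ub _ _).1 andbT; apply/eqP.
exists (fun j => C1 j + (j == i) + C2 j)%N; split=> [j|].
  exact: lt_chain_cat (lt_chain_cat (chain1 j) (lt_chain_upd j lt_v)) (chain2 j).
under eq_bigr => j _ do rewrite 2!(mulnDr j.+1).
rewrite 2!big_split /= sum_succ_indicator.
set S1 := (\sum_(j < n) _ * C1 j)%N in cost1 *; set S2 := (\sum_(j < n) _ * C2 j)%N in cost2 *.
lia.
Qed.

Lemma double_sum_succ m : (2 * \sum_(j < m) j.+1 = m * m.+1)%N.
Proof. by elim: m => [|m IH]; rewrite ?big_ord0 // big_ord_recr /= mulnDr IH; lia. Qed.

Lemma solve_rel_evaluations h join f rho rho' k :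
  has_height (D := D) h -> upper_bound_op join ->
  solve_rel join f n rho rho' k -> (2 * k <= 2 * n + h * (n * n.+1))%N.
Proof.
move=> height ub /(solve_rel_cost ub)[C [chain cost]].
have le_C : (\sum_(j < n) j.+1 * C j <= \sum_(j < n) j.+1 * h)%N.
  by apply: leq_sum => j _; rewrite leq_mul2l (lt_chain_height height (chain j)) orbT.
have sum_h : (2 * \sum_(j < n) j.+1 * h = h * (n * n.+1))%N.
  by rewrite -big_distrl /= mulnA double_sum_succ mulnC.
move: le_C sum_h; set S := (\sum_(j < n) _ * C j)%N; lia.
Qed.

(* An infinite run of solve(i+1): round t calls solve(i), which takes R t to
   R1 t, then changes x_(i+1) and restarts from R t.+1. *)
Definition srr_loop box f (i : 'I_n) (R R1 : nat -> 'I_n -> D) :=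
  forall t, (exists k, solve_rel box f i (R t) (R1 t) k) /\
    box (R1 t i) (f i (R1 t)) <> R1 t i /\
    R t.+1 = upd (R1 t) i (box (R1 t i) (f i (R1 t))).

Lemma srr_loop_value box f i R R1 : srr_loop box f i R R1 -> forall t,
  [/\ R1 t i = R t i, R t.+1 i = box (R t i) (f i (R1 t)) & R t.+1 i <> R t i].
Proof.
move=> loop t; have [[k solve] [changed ->]] := loop t.
by rewrite /upd eqxx (solve_rel_frame solve (leqnn i)) in changed *.
Qed.

Lemma dependent_choice (A : Type) (P : A -> Prop) (Q : A -> A -> Prop) x0 :
  (forall x, P x -> exists y, P y /\ Q x y) -> P x0 ->
  exists s : nat -> A, forall t, P (s t) /\ Q (s t) (s t.+1).
Proof.
move=> step Px0.
pose next (x : {x | P x}) : {x | P x} :=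
  let y := constructive_indefinite_description _ (step _ (proj2_sig x)) in
  exist _ (proj1_sig y) (proj1 (proj2_sig y)).
exists (fun t => proj1_sig (iter t next (exist _ x0 Px0))) => t.
split; first exact: proj2_sig.
rewrite iterS /next /=; set y := constructive_indefinite_description _ _.
exact: proj2 (proj2_sig y).
Qed.

(* If solve(i+1) diverged, every round would end in a diverging recursive
   call; dependent choice strings these rounds together into a loop. *)
Lemma solve_rel_succ_total box f (i : 'I_n) :
  (forall rho, exists rho1 k, solve_rel box f i rho rho1 k) ->
  (forall R R1, ~ srr_loop box f i R R1) ->
  forall rho, exists rho' k, solve_rel box f i.+1 rho rho' k.
Proof.
move=> total_i no_loop rho; apply: NNPP => diverges.
pose stuck (p : ('I_n -> D) * ('I_n -> D)) :=
  (~ exists rho' k, solve_rel box f i.+1 p.1 rho' k) /\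
  exists k, solve_rel box f i p.1 p.2 k.
pose next (p q : ('I_n -> D) * ('I_n -> D)) :=
  box (p.2 i) (f i p.2) <> p.2 i /\ q.1 = upd p.2 i (box (p.2 i) (f i p.2)).
have step p : stuck p -> exists q, stuck q /\ next p q.
  case: p => [r r1] [/= stuck_r [k solve]].
  case: (eqVneq (box (r1 i) (f i r1)) (r1 i)) => [fixed|/eqP changed].
    by case: stuck_r; exists r1, (k + 1)%N; apply: solve_stable.
  pose r' := upd r1 i (box (r1 i) (f i r1)); have [r1' [k' solve']] := total_i r'.
  exists (r', r1'); split=> //; split=> [[rho' [k2 solve2]]|/=]; last by exists k'.
  by apply: stuck_r; exists rho', (k + 1 + k2)%N; apply: solve_change solve2.
have [rho1 [k1 solve1]] := total_i rho.
have [s run] := dependent_choice step (conj diverges (ex_intro _ k1 solve1) : stuck (rho, rho1)).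
apply: (no_loop (fun t => (s t).1) (fun t => (s t).2)) => t.
by case: (run t) => [[_ ?] [? ?]].
Qed.

Lemma solve_rel_total box f : (forall i R R1, ~ srr_loop box f i R R1) ->
  forall rho, exists rho' k, solve_rel box f n rho rho' k.
Proof.
move=> no_loop.
suff total m : (m <= n)%N -> forall rho, exists rho' k, solve_rel box f m rho rho' k.
  exact: total.
elim: m => [_ rho|m IH lt_mn]; first by exists rho, 0%N; apply: solve_zero.
exact: (solve_rel_succ_total (i := Ordinal lt_mn) (IH (ltnW lt_mn)) (@no_loop _)).
Qed.

Lemma join_no_loop h join f i R R1 : has_height (D := D) h -> upper_bound_op join ->
  ~ srr_loop join f i R R1.
Proof.
move=> [_ bounded] ub loop.
suff /(bounded h.+1) : forall t, (t < h.+1)%N -> R t i < R t.+1 i by rewrite ltnn.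
move=> t _; have [_ eq_t ne_t] := srr_loop_value loop t.
rewrite lt_neqAle {2}eq_t (ub _ _).1 andbT eq_sym; exact/eqP.
Qed.

Lemma boxdot_loop_narrowing w nr f i R R1 :
  is_widening w -> is_narrowing nr -> (forall j, monotonic (f j)) ->
  srr_loop (boxdot w nr) f i R R1 ->
  forall t, f i (R1 t) <= R t i -> f i (R1 t.+1) <= R t.+1 i.
Proof.
move=> wide narrowing mono loop t.
have [[k solve_t] [_ eq_next]] := loop t.
have [[k' solve_next] _] := loop t.+1.
rewrite -(solve_rel_frame solve_t (leqnn i)) => le_t.
have [le_fv le_v] := narrowing.1 _ _ le_t.
have post_next : post_below f i.+1 (R t.+1).
  rewrite eq_next /boxdot le_t; apply: post_below_upd mono _ le_fv le_v.
  exact: solve_rel_post_below (boxdot_stable_le (nr := nr) wide) solve_t.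
have le_next := solve_rel_boxdot_le wide narrowing mono solve_next
  (post_below_le (leqnSn i) post_next).
exact: le_trans (mono _ _ _ le_next) (post_next i (ltnSn i)).
Qed.

Lemma boxdot_no_loop w nr f i R R1 :
  is_widening w -> is_narrowing nr -> (forall j, monotonic (f j)) ->
  ~ srr_loop (boxdot w nr) f i R R1.
Proof.
move=> wide narrowing mono loop.
case: (classic (exists t, f i (R1 t) <= R t i)) => [[t0 le_t0]|never].
  have le_from s : f i (R1 (t0 + s)) <= R (t0 + s) i.
    elim: s => [|s IH]; first by rewrite addn0.
    by rewrite addnS; exact: (boxdot_loop_narrowing wide narrowing mono loop).
  apply: narrowing.2; exists (fun s => R (t0 + s) i), (fun s => f i (R1 (t0 + s))) => s.
  have [_ eq_s ne_s] := srr_loop_value loop (t0 + s).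
  by rewrite addnS; split; last split; rewrite // eq_s /boxdot le_from.
apply: wide.2; exists (fun t => R t i), (fun t => f i (R1 t)) => t.
have [_ eq_t ne_t] := srr_loop_value loop t.
have nle : ~~ (f i (R1 t) <= R t i) by apply/negP => le_t; apply: never; exists t.
by split; rewrite // eq_t /boxdot (negbTE nle).
Qed.

End Solve.

Theorem mainTheorem4 (disp : Order.disp_t) (D : porderType disp) (n : nat)
  (f : 'I_n -> ('I_n -> D) -> D) (rho0 : 'I_n -> D) :
  directed (D := D) ->
  (forall i, monotonic (f i)) ->
  (forall (h : nat) (join : D -> D -> D),
      has_height (D := D) h -> upper_bound_op join ->
      (exists rho k, solve_rel join f n rho0 rho k) /\
      (forall rho k, solve_rel join f n rho0 rho k ->
         post_solution f rho /\ (2 * k <= 2 * n + h * (n * n.+1))%N)) /\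
  (forall (w nr : D -> D -> D),
      is_widening w -> is_narrowing nr ->
      (exists rho k, solve_rel (boxdot w nr) f n rho0 rho k) /\
      (forall rho k, solve_rel (boxdot w nr) f n rho0 rho k ->
         post_solution f rho)).
Proof.
move=> _ mono; split=> [h join height ub|w nr wide narrowing].
  split; first by apply: solve_rel_total => i R R1; apply: join_no_loop height ub.
  move=> rho k solve; split; last exact: solve_rel_evaluations height ub solve.
  exact: solve_rel_post_solution (join_stable_le ub) solve.
split; first by apply: solve_rel_total => i R R1; apply: boxdot_no_loop.
move=> rho k; exact: solve_rel_post_solution (boxdot_stable_le wide).
Qed.
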